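(* Fix $L,V,W,K>0$, $\pi\in(0,1)$ and $k_0\in[0,K]$, and regard $\phi_1=\frac{k_0}{k_1}\pi C$ and $\phi_2=\frac{K-k_0}{K-k_2}\pi C$ as functions of the cycle length $T>0$ (with $k_1,k_2$ as in the context). Then: (1) $\phi_1$ is continuous in $T$; $\phi_1$ equals its global minimum $\pi Vk_0$ for all $T\ge\frac1\pi\frac LV$, reaches its global maximum $Vk_0$ at $T=\frac1{j_1}\frac LV$, and reaches local minima $\frac{j_1+\pi}{j_1+1}Vk_0$ at $T=\frac1{j_1+\pi}\frac LV$, for positive integers $j_1$. In particular, for $\frac LV\le T\le\frac1\pi\frac LV$, $\phi_1=\frac{k_0L}{T}$. (2) $\phi_2$ is continuous in $T$; $\phi_2$ equals its global minimum $\pi(K-k_0)W$ for all $T\ge\frac1\pi\frac LW$, reaches its global maximum $(K-k_0)W$ at $T=\frac1{j_2}\frac LW$, and reaches local minima $\frac{j_2+\pi}{j_2+1}(K-k_0)W$ at $T=\frac1{j_2+\pi}\frac LW$, for positive integers $j_2$. In particular, for $\frac LW\le T\le\frac1\pi\frac LW$, $\phi_2=\frac{(K-k_0)L}{T}$.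
   Context: $\bar K=\frac{W}{V+W}K$, $C=V\bar K$. For a cycle length $T>0$ write $\frac LV=(j_1+\alpha_1)T$ with $j_1=\lfloor L/(VT)\rfloor$, $0\le\alpha_1<1$, and $\frac LW=(j_2+\alpha_2)T$ with $j_2=\lfloor L/(WT)\rfloor$, $0\le\alpha_2<1$; define $k_1=\frac{j_1+\min\{\alpha_1/\pi,1\}}{j_1+\alpha_1}\pi\bar K$ and $k_2=K-\frac{j_2+\min\{\alpha_2/\pi,1\}}{j_2+\alpha_2}\pi\frac CW$. (These arise from a ring road of length $L$ with LWR traffic, triangular fundamental diagram $\min\{Vk,(K-k)W\}$, average density $k_0$, and a pretimed signal of cycle length $T$ and effective green ratio $\pi$.) *)

From Stdlib Require Import Reals.
Open Scope R_scope.

Definition rfloor (r : R) : R := IZR (Int_part r).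

Definition Kbar (V W K : R) : R := W / (V + W) * K.
Definition Cap (V W K : R) : R := V * Kbar V W K.

Definition j1 (L V T : R) : R := rfloor (L / V / T).
Definition alpha1 (L V T : R) : R := L / V / T - j1 L V T.
Definition j2 (L W T : R) : R := rfloor (L / W / T).
Definition alpha2 (L W T : R) : R := L / W / T - j2 L W T.

Definition k1 (L V W K pi T : R) : R :=
  (j1 L V T + Rmin (alpha1 L V T / pi) 1) / (j1 L V T + alpha1 L V T) * pi * Kbar V W K.
Definition k2 (L V W K pi T : R) : R :=
  K - (j2 L W T + Rmin (alpha2 L W T / pi) 1) / (j2 L W T + alpha2 L W T)
        * pi * (Cap V W K / W).

Definition phi1 (L V W K pi k0 T : R) : R := k0 / k1 L V W K pi T * pi * Cap V W K.
Definition phi2 (L V W K pi k0 T : R) : R :=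
  (K - k0) / (K - k2 L V W K pi T) * pi * Cap V W K.

Definition local_min_pos (f : R -> R) (x : R) : Prop :=
  exists d : R, 0 < d /\ forall T : R, 0 < T -> Rabs (T - x) < d -> f x <= f T.

From Stdlib Require Import Reals Lra Lia Psatz FunctionalExtensionality.
Open Scope R_scope.

(* Put u = L / (V T). Since j1 + alpha1 = u, one has k1 = cycles u / u * pi * Kbar with
   cycles u = floor u + min (frac u / pi, 1), so phi1 = V k0 * u / cycles u; likewise
   phi2 = (K - k0) W * u / cycles u with u = L / (W T). The map cycles is nondecreasing
   and (1/pi)-Lipschitz, hence continuous, and u <= cycles u <= u / pi. Thus the ratio
   u / cycles u lies in [pi, 1]; it equals pi for u <= pi, u for pi <= u <= 1, 1 at the
   integers, and on each (j, j + 1) it is smallest, namely (j + pi) / (j + 1), at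
   u = j + pi. *)

Lemma rfloor_spec x : rfloor x <= x < rfloor x + 1.
Proof. unfold rfloor; destruct (base_Int_part x); lra. Qed.

Lemma rfloor_IZR z x : IZR z <= x < IZR z + 1 -> rfloor x = IZR z.
Proof. intros Hx; unfold rfloor; rewrite <- (Int_part_spec x z); [reflexivity | lra]. Qed.

Lemma rfloor_INR (j : nat) x : INR j <= x < INR j + 1 -> rfloor x = INR j.
Proof. rewrite INR_IZR_INZ; apply rfloor_IZR. Qed.

Lemma rfloor_le_gap x y : x <= y -> rfloor x = rfloor y \/ rfloor x + 1 <= rfloor y.
Proof.
  intros Hxy; pose proof (rfloor_spec x); pose proof (rfloor_spec y); unfold rfloor in *.
  assert (Hlt : (Int_part x < Int_part y + 1)%Z)
    by (apply lt_IZR; rewrite plus_IZR; simpl; lra).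
  destruct (Z.eq_dec (Int_part x) (Int_part y)) as [-> | Hne]; [now left | right].
  assert (Hle : (Int_part x + 1 <= Int_part y)%Z) by lia.
  apply IZR_le in Hle; rewrite plus_IZR in Hle; simpl in Hle; lra.
Qed.

Lemma rfloor_nonneg u : 0 <= u -> 0 <= rfloor u.
Proof.
  intros Hu; assert (H0 : rfloor 0 = 0) by (apply (rfloor_IZR 0); simpl; lra).
  destruct (rfloor_le_gap 0 u Hu); lra.
Qed.

Lemma continuity_pt_lipschitz (f : R -> R) k x : 0 < k ->
  (forall y z, Rabs (f z - f y) <= k * Rabs (z - y)) -> continuity_pt f x.
Proof.
  intros Hk Hf eps Heps; exists (eps / k); split; [apply Rdiv_lt_0_compat; lra|].
  intros y [_ Hy]; simpl in *; unfold Rdist in *.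
  apply Rle_lt_trans with (k * Rabs (y - x)); [apply Hf|].
  replace eps with (k * (eps / k)) by (field; lra).
  apply Rmult_lt_compat_l; lra.
Qed.

Section Cycles.

Variable pi : R.
Hypothesis Hpi : 0 < pi < 1.

Definition ramp (t : R) : R := Rmin (t / pi) 1.

Definition cycles (u : R) : R := rfloor u + ramp (u - rfloor u).

Lemma mul_pi_div t : pi * (t / pi) = t.
Proof. field; lra. Qed.

Lemma ramp_0 : ramp 0 = 0.
Proof. unfold ramp; rewrite Rmin_left; [field|]; unfold Rdiv; lra. Qed.

Lemma ramp_1 : ramp 1 = 1.
Proof.
  unfold ramp; rewrite Rmin_right; [reflexivity|].
  pose proof (mul_pi_div 1); nra.
Qed.

Lemma ramp_lipschitz t s : t <= s -> 0 <= ramp s - ramp t /\ pi * (ramp s - ramp t) <= s - t.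
Proof.
  intros Hts; unfold ramp.
  pose proof (mul_pi_div t); pose proof (mul_pi_div s).
  unfold Rmin; destruct (Rle_dec (s / pi) 1), (Rle_dec (t / pi) 1); nra.
Qed.

Lemma cycles_lipschitz x y : x <= y ->
  0 <= cycles y - cycles x /\ pi * (cycles y - cycles x) <= y - x.
Proof.
  intros Hxy; unfold cycles.
  pose proof (rfloor_spec x); pose proof (rfloor_spec y).
  destruct (rfloor_le_gap x y Hxy) as [<- | Hgap].
  - set (n := rfloor x); destruct (ramp_lipschitz (x - n) (y - n)); lra.
  - set (n := rfloor x) in *; set (m := rfloor y) in *.
    (* split the gap as [x, n+1] + whole cycles [n+1, m] + [m, y] *)
    destruct (ramp_lipschitz 0 (y - m)); [lra|].
    destruct (ramp_lipschitz (x - n) 1); [lra|].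
    rewrite ramp_0, ramp_1 in *; nra.
Qed.

Lemma cycles_bounds u : 0 <= u -> u <= cycles u /\ pi * cycles u <= u.
Proof.
  intros Hu; unfold cycles, ramp.
  pose proof (rfloor_spec u); pose proof (rfloor_nonneg u Hu).
  set (n := rfloor u) in *; pose proof (mul_pi_div (u - n)).
  unfold Rmin; destruct (Rle_dec ((u - n) / pi) 1); nra.
Qed.

Lemma cycles_small u : 0 <= u <= pi -> cycles u = u / pi.
Proof.
  intros Hu; unfold cycles, ramp; rewrite (rfloor_IZR 0) by (simpl; lra).
  pose proof (mul_pi_div u); rewrite Rmin_left; [simpl; field; lra | nra].
Qed.

Lemma cycles_mid u : pi <= u <= 1 -> cycles u = 1.
Proof.
  intros Hu; destruct (Req_dec u 1) as [-> | Hne].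
  - unfold cycles; rewrite (rfloor_IZR 1) by (simpl; lra); simpl.
    replace (1 - 1) with 0 by ring; rewrite ramp_0; ring.
  - unfold cycles, ramp; rewrite (rfloor_IZR 0) by (simpl; lra).
    pose proof (mul_pi_div u); rewrite Rmin_right; [simpl; ring | nra].
Qed.

Lemma cycles_INR (j : nat) : cycles (INR j) = INR j.
Proof.
  unfold cycles; rewrite (rfloor_INR j) by lra.
  replace (INR j - INR j) with 0 by ring; rewrite ramp_0; ring.
Qed.

Lemma cycles_INR_pi (j : nat) : cycles (INR j + pi) = INR j + 1.
Proof.
  unfold cycles; rewrite (rfloor_INR j) by lra.
  replace (INR j + pi - INR j) with pi by ring.
  unfold ramp; rewrite Rmin_right; [reflexivity | right; field; lra].
Qed.

Lemma cycles_within (n : nat) u : INR n <= u < INR n + 1 ->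
  (INR n + pi) * cycles u <= (INR n + 1) * u.
Proof.
  intros Hu; pose proof (pos_INR n); unfold cycles, ramp; rewrite (rfloor_INR n u Hu).
  set (t := u - INR n); pose proof (mul_pi_div t).
  unfold Rmin; destruct (Rle_dec (t / pi) 1) as [Ht | Ht].
  - (* (n + 1) u - (n + pi) cycles u = n (1 - pi) (1 - t / pi) *)
    assert (0 <= INR n * (1 - pi) * (1 - t / pi))
      by (apply Rmult_le_pos; [apply Rmult_le_pos |]; lra).
    assert (INR n * (pi * (t / pi)) = INR n * t) by congruence.
    unfold t in *; nra.
  - assert (pi <= t) by nra.
    rewrite Rmult_comm; apply Rmult_le_compat_l; unfold t in *; lra.
Qed.

Lemma cycles_continuous u : continuity_pt cycles u.
Proof.
  apply (continuity_pt_lipschitz _ (/ pi)); [apply Rinv_0_lt_compat; lra|].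
  assert (Hord : forall y z, y <= z -> Rabs (cycles z - cycles y) <= / pi * Rabs (z - y)).
  { intros y z Hyz; destruct (cycles_lipschitz y z Hyz).
    rewrite !Rabs_right by lra.
    apply (Rmult_le_reg_l pi); [lra|].
    rewrite <- Rmult_assoc, Rinv_r, Rmult_1_l by lra; lra. }
  intros y z; destruct (Rle_dec y z) as [Hyz | Hzy]; [now apply Hord|].
  rewrite Rabs_minus_sym, (Rabs_minus_sym z); apply Hord; lra.
Qed.

Definition flow_ratio (u : R) : R := u / cycles u.

Lemma flow_ratio_bounds u : 0 < u -> pi <= flow_ratio u <= 1.
Proof.
  intros Hu; destruct (cycles_bounds u) as [Hlo Hhi]; [lra|]; unfold flow_ratio.
  split.
  - apply (Rmult_le_reg_r (cycles u)); [lra|]; unfold Rdiv.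
    rewrite Rmult_assoc, Rinv_l by lra; lra.
  - apply (Rmult_le_reg_r (cycles u)); [lra|]; unfold Rdiv.
    rewrite Rmult_assoc, Rinv_l by lra; lra.
Qed.

Lemma flow_ratio_continuous u : 0 < u -> continuity_pt flow_ratio u.
Proof.
  intros Hu; destruct (cycles_bounds u) as [Hlo _]; [lra|].
  apply (continuity_pt_div id cycles u);
    [apply derivable_continuous_pt, derivable_pt_id | apply cycles_continuous | lra].
Qed.

Lemma flow_ratio_small u : 0 < u <= pi -> flow_ratio u = pi.
Proof. intros Hu; unfold flow_ratio; rewrite cycles_small by lra; field; lra. Qed.

Lemma flow_ratio_mid u : pi <= u <= 1 -> flow_ratio u = u.
Proof. intros Hu; unfold flow_ratio; rewrite cycles_mid by lra; field. Qed.

Lemma flow_ratio_INR (j : nat) : (0 < j)%nat -> flow_ratio (INR j) = 1.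
Proof.
  intros Hj; unfold flow_ratio; rewrite cycles_INR.
  apply Rdiv_diag, not_0_INR; lia.
Qed.

Lemma flow_ratio_INR_pi (j : nat) :
  flow_ratio (INR j + pi) = (INR j + pi) / (INR j + 1).
Proof. unfold flow_ratio; now rewrite cycles_INR_pi. Qed.

Lemma flow_ratio_within (n : nat) u : 0 < u -> INR n <= u < INR n + 1 ->
  (INR n + pi) / (INR n + 1) <= flow_ratio u.
Proof.
  intros Hu Hn; pose proof (pos_INR n); destruct (cycles_bounds u) as [Hc _]; [lra|].
  unfold flow_ratio, Rdiv.
  apply (Rmult_le_reg_r ((INR n + 1) * cycles u)); [nra|].
  replace ((INR n + pi) * / (INR n + 1) * ((INR n + 1) * cycles u))
    with ((INR n + pi) * cycles u) by (field; lra).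
  replace (u * / cycles u * ((INR n + 1) * cycles u))
    with ((INR n + 1) * u) by (field; lra).
  now apply cycles_within.
Qed.
End Cycles.

Lemma local_min_pos_interval (f : R -> R) a b x : a < x < b ->
  (forall T, a < T < b -> f x <= f T) -> local_min_pos f x.
Proof.
  intros Hx Hf; exists (Rmin (x - a) (b - x)); split.
  - apply Rmin_glb_lt; lra.
  - intros T _ HT; apply Hf.
    pose proof (Rmin_l (x - a) (b - x)); pose proof (Rmin_r (x - a) (b - x)).
    destruct (Rabs_def2 _ _ HT); lra.
Qed.

Section Profile.

Variables pi B s : R.
Hypotheses (Hpi : 0 < pi < 1) (HB : 0 < B) (Hs : 0 <= s).

Definition profile (T : R) : R := s * flow_ratio pi (B / T).

Lemma profile_continuous T : 0 < T -> continuity_pt profile T.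
Proof.
  intros HT; apply continuity_pt_scal.
  apply (continuity_pt_comp (fct_cte B / id)%F (flow_ratio pi)).
  - apply continuity_pt_div; [apply continuity_pt_const; now intros ? ? |
      apply derivable_continuous_pt, derivable_pt_id | unfold id; lra].
  - apply flow_ratio_continuous; [exact Hpi|].
    unfold div_fct, fct_cte, id; apply Rdiv_lt_0_compat; lra.
Qed.

Lemma profile_bounds T : 0 < T -> pi * s <= profile T <= s.
Proof.
  intros HT; unfold profile.
  destruct (flow_ratio_bounds pi Hpi (B / T)); [apply Rdiv_lt_0_compat; lra|].
  split; nra.
Qed.

Lemma profile_long_cycle T : / pi * B <= T -> profile T = pi * s.
Proof.
  intros HT; assert (HpB : pi * (/ pi * B) = B) by (field; lra).
  assert (0 < / pi * B) by (apply Rmult_lt_0_compat; [apply Rinv_0_lt_compat|]; lra).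
  assert (Hu : B / T * T = B) by (field; lra).
  unfold profile; rewrite flow_ratio_small by (try exact Hpi; split; nra); ring.
Qed.

Lemma profile_inv_INR (j : nat) : (0 < j)%nat -> profile (/ INR j * B) = s.
Proof.
  intros Hj; assert (0 < INR j) by (apply lt_0_INR; lia).
  unfold profile; replace (B / (/ INR j * B)) with (INR j) by (field; lra).
  rewrite flow_ratio_INR by (try exact Hpi; lia); ring.
Qed.

Lemma profile_inv_INR_pi (j : nat) : (0 < j)%nat ->
  profile (/ (INR j + pi) * B) = (INR j + pi) / (INR j + 1) * s.
Proof.
  intros Hj; assert (0 < INR j) by (apply lt_0_INR; lia).
  unfold profile; replace (B / (/ (INR j + pi) * B)) with (INR j + pi) by (field; lra).
  rewrite flow_ratio_INR_pi by exact Hpi; ring.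
Qed.

Lemma profile_local_min (j : nat) : (0 < j)%nat ->
  local_min_pos profile (/ (INR j + pi) * B).
Proof.
  intros Hj; assert (0 < INR j) by (apply lt_0_INR; lia).
  (* for T in (B / (j + 1), B / j) the cycle count B / T lies in (j, j + 1) *)
  apply (local_min_pos_interval _ (B / (INR j + 1)) (B / INR j)).
  - split; apply Rlt_0_minus.
    + replace (/ (INR j + pi) * B - B / (INR j + 1))
        with (B * (1 - pi) / ((INR j + pi) * (INR j + 1))) by (field; lra).
      apply Rdiv_lt_0_compat; nra.
    + replace (B / INR j - / (INR j + pi) * B)
        with (B * pi / ((INR j + pi) * INR j)) by (field; lra).
      apply Rdiv_lt_0_compat; nra.
  - intros T HT; rewrite (profile_inv_INR_pi j Hj); unfold profile.
    assert (HT0 : 0 < T) by (pose proof (Rdiv_lt_0_compat B (INR j + 1)); lra).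
    assert (Hu : B / T * T = B) by (field; lra).
    assert (Hn1 : B / (INR j + 1) * (INR j + 1) = B) by (field; lra).
    assert (Hn : B / INR j * INR j = B) by (field; lra).
    rewrite Rmult_comm; apply Rmult_le_compat_l; [exact Hs|].
    apply flow_ratio_within; [exact Hpi | apply Rdiv_lt_0_compat; lra | split; nra].
Qed.

Lemma profile_mid T : B <= T <= / pi * B -> profile T = s * B / T.
Proof.
  intros HT; assert (HpB : pi * (/ pi * B) = B) by (field; lra).
  assert (Hu : B / T * T = B) by (field; lra).
  unfold profile; rewrite flow_ratio_mid by (try exact Hpi; split; nra).
  unfold Rdiv; ring.
Qed.
End Profile.

Lemma div_ratio_rescale k c u a b v : a <> 0 -> b <> 0 ->
  k / (c / u * a * b) * a * (v * b) = v * k * (u / c).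
Proof.
  intros Ha Hb; unfold Rdiv; rewrite !Rinv_mult, Rinv_inv.
  set (ic := / c); field; auto.
Qed.

Lemma k1_cycles L V W K pi T :
  k1 L V W K pi T = cycles pi (L / V / T) / (L / V / T) * pi * Kbar V W K.
Proof.
  unfold k1; replace (j1 L V T + alpha1 L V T) with (L / V / T) by (unfold alpha1; ring).
  reflexivity.
Qed.

Lemma k2_cycles L V W K pi T :
  K - k2 L V W K pi T = cycles pi (L / W / T) / (L / W / T) * pi * (Cap V W K / W).
Proof.
  unfold k2; replace (j2 L W T + alpha2 L W T) with (L / W / T) by (unfold alpha2; ring).
  unfold cycles, ramp, alpha2, j2; ring.
Qed.

Lemma phi1_profile L V W K pi k0 : 0 < V -> 0 < W -> 0 < K -> 0 < pi ->
  phi1 L V W K pi k0 = profile pi (L / V) (V * k0).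
Proof.
  intros HV HW HK Hpi; apply functional_extensionality; intros T.
  assert (0 < Kbar V W K)
    by (unfold Kbar; apply Rmult_lt_0_compat; [apply Rdiv_lt_0_compat|]; lra).
  unfold phi1, profile, flow_ratio, Cap; rewrite k1_cycles.
  apply div_ratio_rescale; lra.
Qed.

Lemma phi2_profile L V W K pi k0 : 0 < V -> 0 < W -> 0 < K -> 0 < pi ->
  phi2 L V W K pi k0 = profile pi (L / W) ((K - k0) * W).
Proof.
  intros HV HW HK Hpi; apply functional_extensionality; intros T.
  assert (0 < Cap V W K / W).
  { unfold Cap, Kbar; apply Rdiv_lt_0_compat; [|lra].
    apply Rmult_lt_0_compat; [|apply Rmult_lt_0_compat; [apply Rdiv_lt_0_compat|]]; lra. }
  unfold phi2, profile, flow_ratio; rewrite k2_cycles.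
  replace (Cap V W K) with (W * (Cap V W K / W)) at 2 by (field; lra).
  rewrite div_ratio_rescale by lra; ring.
Qed.

Theorem lemma3p4 (L V W K pi k0 : R) :
  0 < L -> 0 < V -> 0 < W -> 0 < K -> 0 < pi < 1 -> 0 <= k0 <= K ->
  (* (1) *)
  ((forall T, 0 < T -> continuity_pt (phi1 L V W K pi k0) T) /\
   (forall T, 0 < T -> pi * V * k0 <= phi1 L V W K pi k0 T) /\
   (forall T, / pi * (L / V) <= T -> phi1 L V W K pi k0 T = pi * V * k0) /\
   (forall T, 0 < T -> phi1 L V W K pi k0 T <= V * k0) /\
   (forall j : nat, (0 < j)%nat ->
      phi1 L V W K pi k0 (/ INR j * (L / V)) = V * k0) /\
   (forall j : nat, (0 < j)%nat ->
      phi1 L V W K pi k0 (/ (INR j + pi) * (L / V))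
        = (INR j + pi) / (INR j + 1) * V * k0 /\
      local_min_pos (phi1 L V W K pi k0) (/ (INR j + pi) * (L / V))) /\
   (forall T, L / V <= T <= / pi * (L / V) -> phi1 L V W K pi k0 T = k0 * L / T))
  /\
  (* (2) *)
  ((forall T, 0 < T -> continuity_pt (phi2 L V W K pi k0) T) /\
   (forall T, 0 < T -> pi * (K - k0) * W <= phi2 L V W K pi k0 T) /\
   (forall T, / pi * (L / W) <= T -> phi2 L V W K pi k0 T = pi * (K - k0) * W) /\
   (forall T, 0 < T -> phi2 L V W K pi k0 T <= (K - k0) * W) /\
   (forall j : nat, (0 < j)%nat ->
      phi2 L V W K pi k0 (/ INR j * (L / W)) = (K - k0) * W) /\
   (forall j : nat, (0 < j)%nat ->
      phi2 L V W K pi k0 (/ (INR j + pi) * (L / W))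
        = (INR j + pi) / (INR j + 1) * (K - k0) * W /\
      local_min_pos (phi2 L V W K pi k0) (/ (INR j + pi) * (L / W))) /\
   (forall T, L / W <= T <= / pi * (L / W) -> phi2 L V W K pi k0 T = (K - k0) * L / T)).
Proof.
  intros HL HV HW HK Hpi Hk0.
  rewrite (phi1_profile L V W K pi k0), (phi2_profile L V W K pi k0) by lra.
  assert (0 < L / V) by (apply Rdiv_lt_0_compat; lra).
  assert (0 < L / W) by (apply Rdiv_lt_0_compat; lra).
  assert (0 <= V * k0) by nra.
  assert (0 <= (K - k0) * W) by nra.
  split.
  all: split; [intros T HT; now apply profile_continuous |].
  all: split; [intros T HT; rewrite Rmult_assoc; now apply profile_bounds |].
  all: split; [intros T HT; rewrite Rmult_assoc; now apply profile_long_cycle |].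
  all: split; [intros T HT; now apply profile_bounds |].
  all: split; [intros j Hj; now apply profile_inv_INR |].
  all: split; [intros j Hj; rewrite Rmult_assoc;
               split; [now apply profile_inv_INR_pi | now apply profile_local_min] |].
  all: intros T HT; rewrite profile_mid by auto; field; lra.
Qed.
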